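(* Let $O$ be a Cayley algebra over a field $F$ of characteristic $\neq2$ and $H$ a 4-dimensional subalgebra of $O$. Then $\operatorname{im}(H)$ contains a 2-dimensional subspace $T$ of type Q, M, D or J, and $H=\langle T\rangle$.
   Context: Cayley algebra: $D_\gamma(D_\beta(D_\alpha(F)))$, $\alpha,\beta,\gamma\in F^\times$, with $D_\gamma(A)=A\oplus A$ (elements $a+ib$), $(a+ib)(c+id)=(ac+\gamma db^* )+i(a^*d+cb)$, $(a+ib)^*=a^*-ib$, starting from $F$ with identity involution; $\operatorname{im}(H)=\{a\in H:a^*=-a\}$; subalgebras contain $1$. Nilpotent line: 1-dimensional subspace of nilpotent elements. Types of 2-dimensional $U\subseteq\operatorname{im}(O)$: Q if no nilpotent line; U if exactly one nilpotent line $Fu$ and $uv\in Fu$ for all $v\in U$; D if exactly one nilpotent line but not type U; M if exactly two nilpotent lines; Z if all elements nilpotent and all products zero; J if all elements nilpotent but not type Z. *)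

From HB Require Import structures.
From mathcomp Require Import all_boot all_algebra.
Set Implicit Arguments. Unset Strict Implicit. Unset Printing Implicit Defensive.
Import GRing.Theory.
Local Open Scope ring_scope.

(* One Cayley–Dickson doubling step D_g(A) = A (+) A, elements (a, b) = a + i b:
   (a+ib)(c+id) = (ac + g d conj(b)) + i (conj(a) d + c b), conj(a+ib) = conj(a) - i b. *)
Section CayleyDickson.
Variables (F : fieldType) (A : lmodType F).
Definition cd_mul (mul : A -> A -> A) (conj : A -> A) (g : F) (x y : A * A)
  : A * A :=
  (mul x.1 y.1 + g *: mul y.2 (conj x.2), mul (conj x.1) y.2 + mul y.1 x.2).
Definition cd_conj (conj : A -> A) (x : A * A) : A * A := (conj x.1, - x.2).
Definition cd_one (one : A) : A * A := (one, 0).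
End CayleyDickson.

Definition A1 (F : fieldType) := (F^o)%type.
Definition A2 (F : fieldType) := (A1 F * A1 F)%type.
Definition A4 (F : fieldType) := (A2 F * A2 F)%type.
Definition A8 (F : fieldType) := (A4 F * A4 F)%type.

Section Cayley.
Variables (F : fieldType) (al be ga : F).
Definition mul1 (x y : A1 F) : A1 F := (x : F) * y.
Definition conj1 (x : A1 F) : A1 F := x.
Definition one1 : A1 F := (1 : F).
Definition mul2 : A2 F -> A2 F -> A2 F := cd_mul mul1 conj1 al.
Definition conj2 : A2 F -> A2 F := cd_conj conj1.
Definition one2 : A2 F := cd_one one1.
Definition mul4 : A4 F -> A4 F -> A4 F := cd_mul mul2 conj2 be.
Definition conj4 : A4 F -> A4 F := cd_conj conj2.
Definition one4 : A4 F := cd_one one2.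
Definition omul : A8 F -> A8 F -> A8 F := cd_mul mul4 conj4 ga.
Definition oconj : A8 F -> A8 F := cd_conj conj4.
Definition oone : A8 F := cd_one one4.

Definition opow (x : A8 F) (n : nat) : A8 F := iter n (omul x) oone.
Definition nilpotent (x : A8 F) : Prop := exists n, opow x n = 0.

Definition is_subalgebra (H : {vspace A8 F}) : Prop :=
  oone \in H /\ (forall x y, x \in H -> y \in H -> omul x y \in H).

(* im(H) = {a in H : a^* = -a}; "T subset of im(H)". *)
Definition sub_im (T H : {vspace A8 F}) : Prop :=
  forall x, x \in T -> x \in H /\ oconj x = - x.

Definition generated_by (H T : {vspace A8 F}) : Prop :=
  is_subalgebra H /\ (T <= H)%VS /\
  (forall K : {vspace A8 F}, is_subalgebra K -> (T <= K)%VS -> (H <= K)%VS).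

Definition nil_line (U L : {vspace A8 F}) : Prop :=
  (L <= U)%VS /\ \dim L = 1%N /\ (forall x, x \in L -> nilpotent x).

Definition type_Q (U : {vspace A8 F}) : Prop := forall L, ~ nil_line U L.

Definition unique_nil_line (U L : {vspace A8 F}) : Prop :=
  nil_line U L /\ (forall L', nil_line U L' -> L' = L).

Definition type_U (U : {vspace A8 F}) : Prop :=
  exists u, unique_nil_line U <[u]>%VS /\
    (forall v, v \in U -> omul u v \in <[u]>%VS).

Definition type_D (U : {vspace A8 F}) : Prop :=
  (exists L, unique_nil_line U L) /\ ~ type_U U.

Definition type_M (U : {vspace A8 F}) : Prop :=
  exists L1 L2, L1 <> L2 /\ nil_line U L1 /\ nil_line U L2 /\
    (forall L, nil_line U L -> L = L1 \/ L = L2).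

Definition type_Z (U : {vspace A8 F}) : Prop :=
  (forall x, x \in U -> nilpotent x) /\
  (forall x y, x \in U -> y \in U -> omul x y = 0).

Definition type_J (U : {vspace A8 F}) : Prop :=
  (forall x, x \in U -> nilpotent x) /\ ~ type_Z U.
End Cayley.

From HB Require Import structures.
From mathcomp Require Import all_boot all_algebra ring.
From Stdlib Require Import Classical.
Import GRing.Theory.
Local Open Scope ring_scope.
Set Implicit Arguments. Unset Strict Implicit. Unset Printing Implicit Defensive.

(* The heart of the proof (exists_quat_pair) is that a 4-dimensional subalgebra H
   contains imaginary x, y with 1, x, y, xy linearly independent. If not, one finds
   two independent imaginary w1, w2 in H and a 3-dimensional subspace annihilated by
   both on the left (built from the isotropic part of im(H)); this contradicts
   annihilator_dim, which bounds that dimension by 2 because for imaginary w with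
   <w,v> <> 0 every z with wz = 0 is z = w(c vz).
   Then T = span(x, y) works: H = span(1, x, y, xy) is generated by T, and the type
   of T is read off from the number of its nilpotent lines: none (Q), one (D, as T is
   never of type U), two (M), three or more (then N vanishes on T, type J; never Z
   since xy <> 0). *)

Section LinearAlgebra.
Variables (K : fieldType) (vT : vectType K).
Implicit Types (u v w x t l m : vT) (U : {vspace vT}).

Lemma free2P u v :
  reflect (forall a b : K, a *: u + b *: v = 0 -> a = 0 /\ b = 0) (free [:: u; v]).
Proof.
apply: (iffP idP) => [/(freeP (X := [tuple u; v])) hk a b hab | hab].
  have := hk (fun i : 'I_2 => [:: a; b]`_i); rewrite !big_ord_recl big_ord0 addr0 /=.
  by move=> /(_ hab) h; split; [exact: (h ord0) | exact: (h 1)].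
apply/(freeP (X := [tuple u; v])) => k; rewrite !big_ord_recl big_ord0 addr0 => /hab [h0 h1] i.
by case: i => [[|[|//]] hi]; [rewrite -h0 | rewrite -h1]; congr (k _); apply: val_inj.
Qed.

Lemma free4P u v w x :
  reflect (forall a b c d : K, a *: u + b *: v + c *: w + d *: x = 0 ->
            [/\ a = 0, b = 0, c = 0 & d = 0])
          (free [:: u; v; w; x]).
Proof.
apply: (iffP idP) => [/(freeP (X := [tuple u; v; w; x])) hk a b c d habcd | habcd].
  have := hk (fun i : 'I_4 => [:: a; b; c; d]`_i).
  rewrite !big_ord_recl big_ord0 addr0 /= !addrA => /(_ habcd) h.
  by split; [exact: (h ord0) | exact: (h 1) | exact: (h 2%:R) | exact: (h 3%:R)].
apply/(freeP (X := [tuple u; v; w; x])) => k.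
rewrite !big_ord_recl big_ord0 addr0 !addrA => /habcd [h0 h1 h2 h3] i.
by case: i => [[|[|[|[|//]]]] hi]; [rewrite -h0 | rewrite -h1 | rewrite -h2 | rewrite -h3];
  congr (k _); apply: val_inj.
Qed.

Lemma mem_span2P u v t :
  reflect (exists a b, t = a *: u + b *: v) (t \in <<[:: u; v]>>%VS).
Proof.
rewrite span_cons span_seq1; apply: (iffP memv_addP).
  by move=> [p /vlineP [a ->] [q /vlineP [b ->] ->]]; exists a, b.
by move=> [a [b ->]]; exists (a *: u); rewrite ?memvZ ?memv_line //; exists (b *: v);
  rewrite ?memvZ ?memv_line.
Qed.

Lemma line_eq l m : l != 0 -> l \in <[m]>%VS -> <[l]>%VS = <[m]>%VS.
Proof.
by move=> hl hlm; apply/eqP; rewrite eqEdim -memvE hlm !dim_vline hl leq_b1.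
Qed.

Lemma free_lines l m : l != 0 -> m != 0 -> <[l]>%VS != <[m]>%VS -> free [:: l; m].
Proof.
move=> hl hm; apply: contraNT; rewrite free_cons seq1_free hm andbT span_seq1 negbK.
by move=> hlm; apply/eqP; apply: line_eq.
Qed.

Lemma dim1_line (L : {vspace vT}) : \dim L = 1%N -> vpick L != 0 /\ L = <[vpick L]>%VS.
Proof.
move=> hL; have hl : vpick L != 0 by rewrite vpick0 -dimv_eq0 hL.
by split=> //; apply/eqP; rewrite eq_sym eqEdim -memvE memv_pick dim_vline hl hL.
Qed.

Lemma span_free2 U u v : \dim U = 2%N -> u \in U -> v \in U -> free [:: u; v] ->
  <<[:: u; v]>>%VS = U.
Proof.
move=> hU hu hv /eqP huv; apply/eqP; rewrite eqEdim huv hU leqnn andbT.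
by apply/span_subvP => t; rewrite !inE => /orP [] /eqP ->.
Qed.

Lemma pick_free2 U : (2 <= \dim U)%N -> exists u v, [/\ u \in U, v \in U & free [:: u; v]].
Proof.
have := vbasisP U; case: (vbasis U) => s /= hs hb hd.
move: hs hb; case: s => [|u [|v r]] /= hs hb; try by rewrite -(eqP hs) in hd.
exists u, v; split; try by apply: (basis_mem hb); rewrite !inE eqxx ?orbT.
by have := basis_free hb; rewrite (_ : u :: v :: r = [:: u; v] ++ r) // => /catl_free.
Qed.

Lemma dim_add_notin U v : v \notin U -> (\dim U < \dim (U + <[v]>))%N.
Proof. by move=> hv; rewrite (ltn_leqif (dimv_leqif_sup (addvSl U _))) subv_add subvv -memvE. Qed.

Lemma dim_cap_ker_form U (f : 'Hom(vT, K^o)) : (\dim U <= \dim (U :&: lker f) + 1)%N.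
Proof.
rewrite -(limg_ker_dim f U) leq_add2l.
by apply: leq_trans (dimvS (subvf _)) _; rewrite dimvf.
Qed.

Lemma common_eigenvalue (f : 'End(vT)) w1 w2 : free [:: w1; w2] ->
  f w1 \in <[w1]>%VS -> f w2 \in <[w2]>%VS -> f (w1 + w2) \in <[w1 + w2]>%VS ->
  exists nu, f w1 = nu *: w1 /\ f w2 = nu *: w2.
Proof.
move=> /free2P hfree /vlineP [nu1 e1] /vlineP [nu2 e2] /vlineP [nu e].
have [h1 h2] : nu1 - nu = 0 /\ nu2 - nu = 0.
  by apply: hfree; rewrite !scalerBl addrACA -e1 -e2 -opprD -scalerDr -e linearD subrr.
by exists nu; move/eqP: h1; move/eqP: h2; rewrite e1 e2 !subr_eq0 => /eqP -> /eqP ->.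
Qed.
End LinearAlgebra.

Section Octonions.
Variables (F : fieldType) (al be ga : F).

(* The polar form of the norm of O, obtained by doubling x.1 y.1 - al x.2 y.2 twice;
   onorm x = obil x x is the norm N(x), and ore x the real part (x + x^* = 2 ore x). *)
Definition bil2 (x y : A2 F) : F := x.1 * y.1 - al * (x.2 * y.2).
Definition bil4 (x y : A4 F) : F := bil2 x.1 y.1 - be * bil2 x.2 y.2.
Definition obil (x y : A8 F) : F := bil4 x.1 y.1 - ga * bil4 x.2 y.2.
Definition onorm (x : A8 F) : F := obil x x.
Definition ore (x : A8 F) : A1 F := x.1.1.1.

Local Notation "x ** y" := (omul al be ga x y) (at level 40, left associativity).
Local Notation one := (oone F).

Lemma eq8 (x y : A8 F) :
  x.1.1.1 = y.1.1.1 -> x.1.1.2 = y.1.1.2 -> x.1.2.1 = y.1.2.1 -> x.1.2.2 = y.1.2.2 ->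
  x.2.1.1 = y.2.1.1 -> x.2.1.2 = y.2.1.2 -> x.2.2.1 = y.2.2.1 -> x.2.2.2 = y.2.2.2 ->
  x = y.
Proof.
by case: x => [[[? ?] [? ?]] [[? ?] [? ?]]]; case: y => [[[? ?] [? ?]] [[? ?] [? ?]]] /=;
  do 8 move=> ->.
Qed.

Ltac coords x := let a := fresh "a" in let b := fresh "b" in let c := fresh "c" in
  let d := fresh "d" in let e := fresh "e" in let f := fresh "f" in let g := fresh "g" in
  let h := fresh "h" in case: x => [[[a b] [c d]] [[e f] [g h]]].
Ltac unfold_octonions :=
  rewrite /= /omul /oconj /oone /mul4 /mul2 /mul1 /conj4 /conj2 /conj1 /one4 /one2 /one1;
  rewrite /cd_mul /cd_conj /cd_one /onorm /ore /obil /bil4 /bil2 /= /GRing.scale /=.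
Ltac oct_ring := (try apply: eq8); unfold_octonions; ring.
Ltac imag_coords x hx := move: hx; coords x; rewrite /ore /= => ->.

Lemma omulDr x y z : z ** (x + y) = z ** x + z ** y.
Proof. coords x; coords y; coords z; oct_ring. Qed.
Lemma omulZl (c : F) x y : (c *: x) ** y = c *: (x ** y).
Proof. coords x; coords y; oct_ring. Qed.
Lemma omulZr (c : F) x y : x ** (c *: y) = c *: (x ** y).
Proof. coords x; coords y; oct_ring. Qed.
Lemma omul1r x : x ** one = x.
Proof. coords x; oct_ring. Qed.
Lemma omulNl x y : (- x) ** y = - (x ** y).
Proof. coords x; coords y; oct_ring. Qed.
Lemma omulNr x y : x ** (- y) = - (x ** y).
Proof. coords x; coords y; oct_ring. Qed.
Lemma omul0r x : x ** 0 = 0.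
Proof. coords x; oct_ring. Qed.
Lemma obilC x y : obil x y = obil y x.
Proof. coords x; coords y; unfold_octonions; ring. Qed.
Lemma obilDl x y z : obil (x + y) z = obil x z + obil y z.
Proof. coords x; coords y; coords z; unfold_octonions; ring. Qed.
Lemma obilZl (c : F) x y : obil (c *: x) y = c * obil x y.
Proof. coords x; coords y; unfold_octonions; ring. Qed.
Lemma obilDr x y z : obil z (x + y) = obil z x + obil z y.
Proof. by rewrite obilC obilDl !(obilC z). Qed.
Lemma obilZr (c : F) x y : obil y (c *: x) = c * obil y x.
Proof. by rewrite obilC obilZl obilC. Qed.
Lemma obil1l x : obil one x = ore x.
Proof. coords x; unfold_octonions; ring. Qed.
Lemma oreD x y : ore (x + y) = ore x + ore y. Proof. by []. Qed.
Lemma oreZ (c : F) x : ore (c *: x) = c * ore x. Proof. by []. Qed.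
Lemma ore1 : ore one = 1. Proof. by []. Qed.

Lemma onorm_lin2 (a b : F) u v :
  onorm (a *: u + b *: v) = a ^+ 2 * onorm u + 2 * a * b * obil u v + b ^+ 2 * onorm v.
Proof. coords u; coords v; unfold_octonions; ring. Qed.
Lemma onormZ (c : F) x : onorm (c *: x) = c ^+ 2 * onorm x.
Proof. coords x; unfold_octonions; ring. Qed.
Lemma onormM x y : onorm (x ** y) = onorm x * onorm y.
Proof. coords x; coords y; unfold_octonions; ring. Qed.
Lemma obil_mull x y : obil (x ** y) x = onorm x * ore y.
Proof. coords x; coords y; unfold_octonions; ring. Qed.
Lemma obil_mulr x y : obil (x ** y) y = onorm y * ore x.
Proof. coords x; coords y; unfold_octonions; ring. Qed.

Lemma conj_imag x : ore x = 0 -> oconj x = - x.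
Proof. move=> hx; imag_coords x hx; oct_ring. Qed.
Lemma sq_imag x : ore x = 0 -> x ** x = (- onorm x) *: one.
Proof. move=> hx; imag_coords x hx; oct_ring. Qed.
Lemma left_alt_imag x z : ore x = 0 -> x ** (x ** z) = (- onorm x) *: z.
Proof. move=> hx; imag_coords x hx; coords z; oct_ring. Qed.
Lemma anticomm_imag x y : ore x = 0 -> ore y = 0 ->
  x ** y + y ** x = (- (2 * obil x y)) *: one.
Proof. move=> hx hy; imag_coords x hx; imag_coords y hy; oct_ring. Qed.
Lemma ore_mul_imag x y : ore x = 0 -> ore y = 0 -> ore (x ** y) = - obil x y.
Proof. move=> hx hy; imag_coords x hx; imag_coords y hy; unfold_octonions; ring. Qed.

Lemma polar_left_alt u v z : oconj u ** (v ** z) + oconj v ** (u ** z) = (2 * obil u v) *: z.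
Proof. coords u; coords v; coords z; oct_ring. Qed.

Definition basis8 (i : nat) : A8 F :=
  (((i == 0%N)%:R, (i == 1%N)%:R, ((i == 2%N)%:R, (i == 3%N)%:R)),
   ((i == 4%N)%:R, (i == 5%N)%:R, ((i == 6%N)%:R, (i == 7%N)%:R))).

(* For nonzero al, be, ga the polar form is nondegenerate (it is diagonal in basis8). *)
Lemma obil_nondeg (hal : al != 0) (hbe : be != 0) (hga : ga != 0) w :
  (forall v, obil w v = 0) -> w = 0.
Proof.
move=> hw; have := hw (basis8 0); have := hw (basis8 1); have := hw (basis8 2);
have := hw (basis8 3); have := hw (basis8 4); have := hw (basis8 5);
have := hw (basis8 6); have := hw (basis8 7).
clear hw; coords w; unfold_octonions; rewrite /basis8 /=.
rewrite !(mul0r, mulr0, mul1r, mulr1, subr0, sub0r, addr0, add0r, oppr0, opprK, mulrN, mulNr).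
move=> /eqP h7 /eqP h6 /eqP h5 /eqP h4 /eqP h3 /eqP h2 /eqP h1 /eqP h0.
rewrite !oppr_eq0 !mulf_eq0 (negbTE hal) (negbTE hbe) (negbTE hga) /= in h1 h2 h3 h4 h5 h6 h7.
by apply: eq8; apply/eqP.
Qed.

Lemma onorm0 : onorm 0 = 0.
Proof. unfold_octonions; ring. Qed.
Lemma onormE x : obil x x = onorm x. Proof. by []. Qed.
Lemma obil0l x : obil 0 x = 0.
Proof. by rewrite -(scale0r (0 : A8 F)) obilZl mul0r. Qed.

(* From here on only the identities above are used; opacity keeps simplification
   from expanding the coordinate formulas. *)
Opaque omul oconj obil onorm.

Lemma one_neq0 : one != 0.
Proof. by apply/eqP => /(congr1 ore); rewrite ore1 => /eqP; rewrite oner_eq0. Qed.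

(* An imaginary element is nilpotent exactly when its norm vanishes, by x(xz) = -N(x) z. *)
Lemma opow_imag x n : ore x = 0 -> opow al be ga x n.+2 = (- onorm x) *: opow al be ga x n.
Proof. by move=> hx; rewrite /opow !iterS left_alt_imag. Qed.

Lemma nilpotent_imagP x : ore x = 0 -> nilpotent al be ga x <-> onorm x = 0.
Proof.
move=> hx; split=> [[n hn] | hx0]; last by exists 2%N; rewrite opow_imag // hx0 oppr0 scale0r.
apply/eqP; apply: contraLR (introT eqP hn) => hnx.
suff pow_neq0 : forall m, opow al be ga x m != 0 /\ opow al be ga x m.+1 != 0.
  by case: (pow_neq0 n).
elim=> [|m [ih0 ih1]]; first by rewrite /opow /= omul1r one_neq0; split=> //;
  apply: contraNneq hnx => ->; rewrite onorm0.
by split=> //; rewrite opow_imag // scaler_eq0 negb_or oppr_eq0 hnx ih0.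
Qed.

Lemma annihilator_step u v z : ore u = 0 -> u ** z = 0 ->
  u ** (v ** z) = (- (2 * obil u v)) *: z.
Proof.
move=> hu hz; apply/eqP.
by rewrite scaleNr -polar_left_alt hz omul0r addr0 conj_imag // omulNl opprK.
Qed.

Fact omul_is_linear w : linear (omul al be ga w).
Proof. by move=> c u v; rewrite omulDr omulZr. Qed.
HB.instance Definition _ w :=
  GRing.isLinear.Build F (A8 F) (A8 F) *:%R (omul al be ga w) (omul_is_linear w).

Definition Lmul w : 'End(A8 F) := linfun (omul al be ga w).

Lemma Lmul_ker w z : (z \in lker (Lmul w)) = (w ** z == 0).
Proof. by rewrite memv_ker lfunE. Qed.

(* x and y are imaginary and 1, x, y, xy are linearly independent; such a pair spans a
   4-dimensional subalgebra. *)
Definition quat_pair x y : Prop := [/\ ore x = 0, ore y = 0 & free [:: one; x; y; x ** y]].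

Lemma ore_rel (a b c d : F) x y : ore x = 0 -> ore y = 0 ->
  ore (a *: one + b *: x + c *: y + d *: (x ** y)) = a - d * obil x y.
Proof.
by move=> hx hy; rewrite !oreD !oreZ ore_mul_imag // ore1 hx hy !mulr0 mulr1 !addr0 mulrN.
Qed.

Lemma obil_rel (a b c d : F) x y t :
  obil (a *: one + b *: x + c *: y + d *: (x ** y)) t =
  a * ore t + b * obil x t + c * obil y t + d * obil (x ** y) t.
Proof. by rewrite !obilDl !obilZl obil1l. Qed.

Lemma quat_pair_anisotropic x y : ore x = 0 -> ore y = 0 -> onorm x != 0 -> onorm y != 0 ->
  obil x y = 0 -> quat_pair x y.
Proof.
move=> hx hy hnx hny hxy; split=> //; apply/free4P => a b c d hR.
have ha : a = 0 by have := congr1 ore hR; rewrite ore_rel // hxy mulr0 subr0.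
have hb : b = 0.
  have := congr1 (obil^~ x) hR; rewrite /= obil_rel obil0l obil_mull hx hy onormE obilC hxy.
  by rewrite !mulr0 !addr0 add0r => /eqP; rewrite mulf_eq0 (negbTE hnx) orbF => /eqP.
have hc : c = 0.
  have := congr1 (obil^~ y) hR; rewrite /= obil_rel obil0l obil_mulr hx hy onormE hxy.
  by rewrite !mulr0 !addr0 add0r => /eqP; rewrite mulf_eq0 (negbTE hny) orbF => /eqP.
move: hR; rewrite ha hb hc !scale0r !add0r => /(congr1 onorm).
rewrite onormZ onormM onorm0 => /eqP; rewrite !mulf_eq0 orbb (negbTE hnx) (negbTE hny).
by rewrite !orbF => /eqP.
Qed.

Lemma quat_pair_mixed x w : ore x = 0 -> ore w = 0 -> onorm x != 0 -> obil x w = 0 ->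
  x ** w \notin <[w]>%VS -> quat_pair x w.
Proof.
move=> hx hw hnx hxw hxww; split=> //; apply/free4P => a b c d hR.
have hw0 : w != 0 by apply: contraNneq hxww => ->; rewrite omul0r memv0.
have ha : a = 0 by have := congr1 ore hR; rewrite ore_rel // hxw mulr0 subr0.
have hb : b = 0.
  have := congr1 (obil^~ x) hR; rewrite /= obil_rel obil0l obil_mull hx hw onormE obilC hxw.
  by rewrite !mulr0 !addr0 add0r => /eqP; rewrite mulf_eq0 (negbTE hnx) orbF => /eqP.
move: hR; rewrite ha hb !scale0r !add0r => hR.
have hd : d = 0.
  apply: contraNeq hxww => hd; apply/vlineP; exists (- (c / d)).
  apply: (scalerI hd); rewrite scalerA mulrN mulrCA divff // mulr1 scaleNr.
  by apply/eqP; rewrite -addr_eq0 addrC hR.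
move: hR; rewrite hd scale0r addr0 => /eqP; rewrite scaler_eq0 (negbTE hw0) orbF => /eqP.
by split.
Qed.

Lemma quat_pair_isotropic w w' : ore w = 0 -> ore w' = 0 -> onorm w = 0 -> onorm w' = 0 ->
  obil w w' = 0 -> w ** w' != 0 -> quat_pair w w'.
Proof.
move=> hw hw' hn hn' hww' hne; split=> //; apply/free4P => a b c d hR.
have ww : w ** w = 0 by rewrite sq_imag // hn oppr0 scale0r.
have w'w' : w' ** w' = 0 by rewrite sq_imag // hn' oppr0 scale0r.
have w'w : w' ** w = - (w ** w').
  by apply/eqP; rewrite -addr_eq0 addrC anticomm_imag // hww' mulr0 oppr0 scale0r.
have w_ww' : w ** (w ** w') = 0 by rewrite left_alt_imag // hn oppr0 scale0r.
have w'_ww' : w' ** (w ** w') = 0.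
  by rewrite -(opprK (w ** w')) -w'w omulNr left_alt_imag // hn' oppr0 scale0r oppr0.
have ha : a = 0 by have := congr1 ore hR; rewrite ore_rel // hww' mulr0 subr0.
move: hR; rewrite ha scale0r add0r => hR.
have hc : c = 0.
  have := congr1 (omul al be ga w) hR; rewrite !omulDr !omulZr ww w_ww' omul0r.
  by rewrite !scaler0 add0r addr0 => /eqP; rewrite scaler_eq0 (negbTE hne) orbF => /eqP.
have hb : b = 0.
  have := congr1 (omul al be ga w') hR; rewrite !omulDr !omulZr w'w w'w' w'_ww' omul0r.
  rewrite !scaler0 !addr0 scalerN => /eqP; rewrite oppr_eq0 scaler_eq0 (negbTE hne) orbF.
  by move/eqP.
move: hR; rewrite hb hc !scale0r !add0r => /eqP; rewrite scaler_eq0 (negbTE hne) orbF.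
by move/eqP.
Qed.

Fact ore_is_linear : linear ore. Proof. by []. Qed.
HB.instance Definition _ := GRing.isLinear.Build F (A8 F) (A1 F) *:%R ore ore_is_linear.

Definition obil_form w (v : A8 F) : A1 F := obil w v.
Fact obil_form_is_linear w : linear (obil_form w).
Proof. by move=> c u v; rewrite /obil_form obilDr obilZr. Qed.
HB.instance Definition _ w :=
  GRing.isLinear.Build F (A8 F) (A1 F) *:%R (obil_form w) (obil_form_is_linear w).

Definition imag_part (U : {vspace A8 F}) : {vspace A8 F} := (U :&: lker (linfun ore))%VS.
Definition orth_part (U : {vspace A8 F}) w : {vspace A8 F} :=
  (U :&: lker (linfun (obil_form w)))%VS.

Lemma mem_imag_part U t : (t \in imag_part U) = (t \in U) && (ore t == 0).
Proof. by rewrite memv_cap memv_ker lfunE. Qed.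
Lemma mem_orth_part U w t : (t \in orth_part U w) = (t \in U) && (obil w t == 0).
Proof. by rewrite memv_cap memv_ker lfunE. Qed.

Definition has_quat_pair (U : {vspace A8 F}) : Prop :=
  exists x y, [/\ x \in U, y \in U & quat_pair x y].

Section CharNot2.
Hypothesis hchar : (2%:R : F) != 0.

Lemma obil_isotropic u v : onorm u = 0 -> onorm v = 0 -> onorm (u + v) = 0 -> obil u v = 0.
Proof.
move=> hu hv huv; have := onorm_lin2 1 1 u v; rewrite !scale1r huv hu hv.
rewrite !mulr0 add0r addr0 !mulr1 => /esym/eqP; rewrite mulf_eq0 (negbTE hchar) /=.
by move/eqP.
Qed.

(* Without quaternion pairs in V, products inside a totally isotropic imaginary subspace
   of V vanish (quat_pair_isotropic). *)
Lemma isotropic_products (V S : {vspace A8 F}) : (S <= V)%VS ->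
  {in S, forall t, ore t = 0} -> {in S, forall t, onorm t = 0} -> ~ has_quat_pair V ->
  {in S &, forall u v, u ** v = 0}.
Proof.
move=> hSV hre hiso hnone u v hu hv; apply: NNPP => huv; apply: hnone.
exists u, v; split; try exact: (subvP hSV).
apply: quat_pair_isotropic; rewrite ?hre ?hiso //; last exact/eqP.
by apply: obil_isotropic; rewrite hiso ?memvD.
Qed.

Section PairPlane.
Variables x y : A8 F.
Hypothesis hq : quat_pair x y.
Local Notation T := <<[:: x; y]>>%VS.

Lemma pair_span_re t : t \in T -> ore t = 0.
Proof. by case: hq => hx hy _ /mem_span2P [a [b ->]]; rewrite oreD !oreZ hx hy !mulr0 addr0. Qed.

Lemma dim_pair_span : \dim T = 2%N.
Proof.
case: hq => _ _; rewrite free_cons (_ : [:: x; y; x ** y] = [:: x; y] ++ [:: x ** y]) //.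
by case/andP=> _ /catl_free/eqP.
Qed.

Lemma pair_prod_notin (d : F) : d *: (x ** y) \in <<[:: one; x; y]>>%VS -> d = 0.
Proof.
case: hq => _ _; rewrite (perm_free (Y := [:: x ** y; one; x; y])); last first.
  by rewrite (perm_catC [:: one; x; y] [:: x ** y]).
rewrite free_cons => /andP [hxy _] hd; apply: contraNeq hxy => hd0.
by rewrite -[x ** y](scalerK hd0); apply: memvZ.
Qed.

Lemma not_type_Z : ~ type_Z al be ga T.
Proof.
case=> _ hZ; have hxy : x ** y = 0 by apply: hZ; apply: memv_span; rewrite !inE eqxx ?orbT.
by have := pair_prod_notin (d := 1); rewrite scale1r hxy mem0v => /(_ isT)/eqP; rewrite oner_eq0.
Qed.

(* If u spans the only nilpotent line and uT lies on it, then writing u = a x + b y,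
   either b = 0 and a xy = uy, or b xy = x u - a x^2 = -2<x,u> - ux - a x^2: both
   put a nonzero multiple of xy in span(1, x, y). *)
Lemma not_type_U : ~ type_U al be ga T.
Proof.
case: (hq) => hx hy _ [u [[[huL [hdim _]] _] hprod]].
have huT : u \in T by apply: (subvP huL); exact: memv_line.
have hu0 : u != 0 by move: hdim; rewrite dim_vline; case: (u != 0).
have hTS : (T <= <<[:: one; x; y]>>)%VS.
  by apply: sub_span => t; rewrite !inE => /orP [] ->; rewrite ?orbT.
have huS : forall t, t \in T -> u ** t \in <<[:: one; x; y]>>%VS.
  by move=> t ht; have /vlineP [k ->] := hprod t ht; apply: memvZ; apply: (subvP hTS).
have /mem_span2P [a [b hu]] := huT.
have hyT : y \in T by apply: memv_span; rewrite !inE eqxx orbT.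
have hxT : x \in T by apply: memv_span; rewrite !inE eqxx.
case: (eqVneq b 0) => [hb0 | hb].
  have ha : a != 0 by apply: contraNneq hu0 => ha0; rewrite hu ha0 hb0 !scale0r addr0.
  have e : a *: (x ** y) = u ** y by rewrite hu hb0 scale0r addr0 omulZl.
  by apply: (negP ha); apply/eqP; apply: pair_prod_notin; rewrite e; apply: huS.
have hxu : x ** u = a *: (x ** x) + b *: (x ** y) by rewrite hu omulDr !omulZr.
have hac : x ** u + u ** x = (- (2 * obil x u)) *: one.
  by rewrite anticomm_imag // (pair_span_re huT).
have e : b *: (x ** y) = (- (2 * obil x u)) *: one - u ** x - a *: (x ** x).
  by rewrite -hac addrK hxu addrC addKr.
have h1S : one \in <<[:: one; x; y]>>%VS by apply: memv_span; rewrite inE eqxx.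
apply: (negP hb); apply/eqP; apply: pair_prod_notin; rewrite e sq_imag //.
by apply: memvB; [apply: memvB; [apply: memvZ | exact: huS] | do 2 apply: memvZ].
Qed.

Lemma nil_lineP L : nil_line al be ga T L ->
  exists l, [/\ l != 0, L = <[l]>%VS, l \in T & onorm l = 0].
Proof.
move=> [hLT [hdim hnil]]; have [hl0 hL] := dim1_line hdim.
have hlT : vpick L \in T by apply: (subvP hLT); exact: memv_pick.
exists (vpick L); split=> //.
by apply/(nilpotent_imagP (pair_span_re hlT)); apply: hnil; exact: memv_pick.
Qed.

(* A binary quadratic form with three distinct isotropic lines vanishes (char <> 2). *)
Lemma three_nil_lines L1 L2 L3 : nil_line al be ga T L1 -> nil_line al be ga T L2 ->
  nil_line al be ga T L3 -> L1 <> L2 -> L3 <> L1 -> L3 <> L2 ->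
  {in T, forall t, nilpotent al be ga t}.
Proof.
move=> /nil_lineP [l1 [h10 -> h1T hn1]] /nil_lineP [l2 [h20 -> h2T hn2]].
move=> /nil_lineP [l3 [h30 -> h3T hn3]] n12 n31 n32.
have hT : <<[:: l1; l2]>>%VS = T.
  apply: span_free2; [exact: dim_pair_span | exact: h1T | exact: h2T |].
  by apply: (free_lines h10 h20); apply/eqP.
have [a [b e3]] : exists a b, l3 = a *: l1 + b *: l2 by apply/mem_span2P; rewrite hT.
have ha : a != 0.
  apply: contra_notN n32 => /eqP ha0; apply: line_eq => //.
  by rewrite e3 ha0 scale0r add0r; apply: memvZ; apply: memv_line.
have hb : b != 0.
  apply: contra_notN n31 => /eqP hb0; apply: line_eq => //.
  by rewrite e3 hb0 scale0r addr0; apply: memvZ; apply: memv_line.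
have h12 : obil l1 l2 = 0.
  move: hn3; rewrite e3 onorm_lin2 hn1 hn2 !mulr0 add0r addr0 => /eqP.
  by rewrite !mulf_eq0 (negbTE hchar) (negbTE ha) (negbTE hb) /= => /eqP.
move=> t ht; have := ht; rewrite -hT => /mem_span2P [c [d ht']].
apply/(nilpotent_imagP (pair_span_re ht)).
by rewrite ht' onorm_lin2 hn1 hn2 h12 !mulr0 !addr0.
Qed.

Lemma pair_plane_type : type_Q al be ga T \/ type_M al be ga T \/ type_D al be ga T \/
  type_J al be ga T.
Proof.
case: (classic (exists L, nil_line al be ga T L)) => [[L1 hL1] | hnone]; last first.
  by left => L hL; apply: hnone; exists L.
case: (classic (forall L, nil_line al be ga T L -> L = L1)) => [huniq | ].
  by right; right; left; split; [exists L1 | exact: not_type_U].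
move=> /not_all_ex_not [L2 hL2']; have [hL2 n21] := imply_to_and _ _ hL2'.
case: (classic (forall L, nil_line al be ga T L -> L = L1 \/ L = L2)) => [htwo | ].
  by right; left; exists L1, L2; split=> // e; apply: n21.
move=> /not_all_ex_not [L3 hL3']; have [hL3 /not_or_and [n31 n32]] := imply_to_and _ _ hL3'.
right; right; right; split; last exact: not_type_Z.
by apply: (three_nil_lines hL1 hL2 hL3) => // e; apply: n21.
Qed.
End PairPlane.
Section Nondegenerate.
Hypotheses (hal : al != 0) (hbe : be != 0) (hga : ga != 0).

Lemma exists_orth w1 w2 : free [:: w1; w2] -> exists v, obil w1 v != 0 /\ obil w2 v = 0.
Proof.
move=> hfree; have /free2P hi := hfree.
have hw2 : w2 != 0 by apply: (free_not0 hfree); rewrite !inE eqxx orbT.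
have [v0 hv0] : exists v0, obil w2 v0 != 0.
  apply: NNPP => hn; apply: (negP hw2); apply/eqP; apply: (obil_nondeg hal hbe hga) => v.
  by apply: NNPP => hv; apply: hn; exists v; apply/eqP.
apply: NNPP => hn; apply: (negP hv0); apply/eqP.
suff [] : obil w2 v0 = 0 /\ - obil w1 v0 = 0 by [].
apply: hi; apply: (obil_nondeg hal hbe hga) => v.
pose v' := obil w2 v0 *: v + (- obil w2 v) *: v0.
have h2 : obil w2 v' = 0 by rewrite obilDr !obilZr mulNr mulrC subrr.
have h1 : obil w1 v' = 0 by apply: NNPP => h; apply: hn; exists v'; split=> //; apply/eqP.
by rewrite -[RHS]h1 obilDl !obilZl obilDr !obilZr; ring.
Qed.

(* If u is imaginary and <u,v> != 0, each z with uz = 0 equals u(c vz) for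
   c = -(2<u,v>)^-1 (annihilator_step); hence, on a subspace S stable under left
   multiplication by v, the kernel of L_u lies in L_u(S) and has at most half the
   dimension of S. *)
Lemma annihilator_in_image u v (S : {vspace A8 F}) : ore u = 0 -> obil u v != 0 ->
  {in S, forall z, v ** z \in S} -> (S :&: lker (Lmul u) <= Lmul u @: S)%VS.
Proof.
move=> hu huv hS; apply/subvP => z /memv_capP [hzS]; rewrite Lmul_ker => /eqP hz.
have hc : - (2 * obil u v) != 0 by rewrite oppr_eq0 mulf_neq0.
have -> : z = Lmul u ((- (2 * obil u v))^-1 *: (v ** z)).
  by rewrite lfunE /= omulZr annihilator_step // scalerA mulVf // scale1r.
by apply/memv_img/memvZ/hS.
Qed.

Lemma annihilator_half_dim u v (S : {vspace A8 F}) : ore u = 0 -> obil u v != 0 ->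
  {in S, forall z, v ** z \in S} -> (2 * \dim (S :&: lker (Lmul u)) <= \dim S)%N.
Proof.
move=> hu huv hS; rewrite -(limg_ker_dim (Lmul u) S) mul2n -addnn leq_add2l.
exact: dimvS (annihilator_in_image hu huv hS).
Qed.

(* Two independent imaginary elements have a common left annihilator of dimension at
   most 2: L_w2 has kernel of dimension <= 4, and L_w1 halves it again. *)
Lemma annihilator_dim w1 w2 (Z : {vspace A8 F}) : ore w1 = 0 -> ore w2 = 0 ->
  free [:: w1; w2] -> {in Z, forall z, w1 ** z = 0 /\ w2 ** z = 0} -> (\dim Z <= 2)%N.
Proof.
move=> hw1 hw2 hfree hZ.
have hfree' : free [:: w2; w1].
  by rewrite (perm_free (Y := [:: w1; w2])) // (perm_catC [:: w2] [:: w1]).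
have [v2 [hv2 _]] := exists_orth hfree'.
have [v1 [hv1 hv12]] := exists_orth hfree.
have hK2 := annihilator_half_dim (S := fullv) hw2 hv2 (fun z _ => memvf _).
have hK12 : (2 * \dim (lker (Lmul w2) :&: lker (Lmul w1)) <= \dim (lker (Lmul w2)))%N.
  apply: (annihilator_half_dim hw1 hv1) => z; rewrite !Lmul_ker => /eqP hz.
  by rewrite annihilator_step // hv12 mulr0 oppr0 scale0r.
have hZK : (Z <= lker (Lmul w2) :&: lker (Lmul w1))%VS.
  by apply/subvP => z /hZ [hz1 hz2]; rewrite memv_cap !Lmul_ker hz1 hz2 eqxx.
have hK2' : (\dim (lker (Lmul w2)) <= 4)%N.
  by rewrite -(leq_pmul2l (isT : (0 < 2)%N)); move: hK2; rewrite capfv dimvf.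
apply: leq_trans (dimvS hZK) _; rewrite -(leq_pmul2l (isT : (0 < 2)%N)).
exact: leq_trans hK12 hK2'.
Qed.

Section Subalgebra.
Variable H : {vspace A8 F}.
Hypotheses (hH : is_subalgebra al be ga H) (hdimH : \dim H = 4%N).

Lemma imag_part_re : {in imag_part H, forall t, ore t = 0}.
Proof. by move=> t; rewrite mem_imag_part => /andP [_ /eqP]. Qed.

Lemma dim_imag_part : (3 <= \dim (imag_part H))%N.
Proof. by have := dim_cap_ker_form H (linfun ore); rewrite hdimH addn1 ltnS. Qed.

(* If im(H) is totally isotropic, it is annihilated by two of its independent elements. *)
Lemma pair_of_isotropic : {in imag_part H, forall t, onorm t = 0} ->
  has_quat_pair (imag_part H).
Proof.
move=> hiso; apply: NNPP => hnone.
have prod0 := isotropic_products (subvv _) imag_part_re hiso hnone.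
have [w1 [w2 [hw1 hw2 hfree]]] := pick_free2 (leq_trans (isT : (2 <= 3)%N) dim_imag_part).
suff : (\dim (imag_part H) <= 2)%N by rewrite leqNgt dim_imag_part.
apply: (annihilator_dim (imag_part_re hw1) (imag_part_re hw2) hfree) => z hz.
by split; apply: prod0.
Qed.

(* If x in im(H) is anisotropic, the imaginary elements W of H orthogonal to x form a
   totally isotropic plane whose lines are L_x-stable; they share an eigenvalue nu with
   nu^2 = -N(x), so W + <nu + x> is a 3-dimensional common annihilator of two
   independent elements of W. *)
Lemma pair_of_anisotropic x : x \in imag_part H -> onorm x != 0 ->
  has_quat_pair (imag_part H).
Proof.
move=> hxV hnx; apply: NNPP => hnone; have hx := imag_part_re hxV.
pose W := orth_part (imag_part H) x.
have hWV : (W <= imag_part H)%VS by apply: capvSl.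
have hWre : {in W, forall t, ore t = 0} by move=> t /(subvP hWV)/imag_part_re.
have hWx : {in W, forall t, obil x t = 0} by move=> t; rewrite mem_orth_part => /andP [_ /eqP].
have dimW : (2 <= \dim W)%N.
  rewrite -(leq_add2r 1); apply: leq_trans dim_imag_part _.
  exact: dim_cap_ker_form (imag_part H) (linfun (obil_form x)).
have hWiso : {in W, forall t, onorm t = 0}.
  move=> t ht; apply: NNPP => hnt; apply: hnone; exists x, t; split=> //.
    exact: (subvP hWV).
  by apply: quat_pair_anisotropic => //; [exact: hWre | exact/eqP | exact: hWx].
have hWeig : {in W, forall t, x ** t \in <[t]>%VS}.
  move=> t ht; apply: NNPP => hxt; apply: hnone; exists x, t; split=> //.
    exact: (subvP hWV).
  by apply: quat_pair_mixed => //; [exact: hWre | exact: hWx | exact/negP].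
have prod0 := isotropic_products hWV hWre hWiso hnone.
have [w1 [w2 [hw1 hw2 hfree]]] := pick_free2 dimW.
have [nu [hxw1 hxw2]] : exists nu, x ** w1 = nu *: w1 /\ x ** w2 = nu *: w2.
  have := common_eigenvalue (f := Lmul x) hfree; rewrite !lfunE /=.
  by apply; apply: hWeig; rewrite ?memvD.
have hw10 : w1 != 0 by apply: (free_not0 hfree); rewrite inE eqxx.
have hnu0 : nu != 0.
  apply: contra_neq hnx => hnu0; apply/eqP; rewrite -oppr_eq0.
  have := congr1 (omul al be ga x) hxw1; rewrite left_alt_imag // omulZr hxw1 hnu0 !scale0r.
  by move/eqP; rewrite scaler_eq0 (negbTE hw10) orbF.
pose z : A8 F := nu *: one + x.
have hz : forall w, w \in W -> x ** w = nu *: w -> w ** z = 0.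
  move=> w hw hxw; rewrite omulDr omulZr omul1r.
  have : x ** w + w ** x = 0.
    by rewrite anticomm_imag ?(hWre w hw) // hWx // mulr0 oppr0 scale0r.
  by rewrite hxw.
have hzW : z \notin W.
  by apply: contra hnu0 => /hWre; rewrite /z oreD oreZ ore1 hx mulr1 addr0 => ->.
have : (\dim (W + <[z]>) <= 2)%N.
  apply: (annihilator_dim (hWre w1 hw1) (hWre w2 hw2) hfree).
  move=> t /memv_addP [s hs [_ /vlineP [c ->] ->]].
  by rewrite !omulDr !omulZr hz // (hz w2) // !prod0 // scaler0 addr0.
by move/(leq_trans (dim_add_notin hzW)); rewrite ltnNge dimW.
Qed.

Lemma exists_quat_pair : has_quat_pair (imag_part H).
Proof.
case: (classic (exists2 x, x \in imag_part H & onorm x != 0)) => [[x hxV hnx] | hiso].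
  exact: pair_of_anisotropic hxV hnx.
apply: pair_of_isotropic => t ht.
by apply/eqP/contraT => hnt; exfalso; apply: hiso; exists t.
Qed.

Lemma span_quat_pair x y : x \in H -> y \in H -> quat_pair x y ->
  <<[:: one; x; y; x ** y]>>%VS = H.
Proof.
move=> hx hy [_ _ hfree]; have [h1 hM] := hH.
apply/eqP; rewrite eqEdim (eqP hfree) hdimH leqnn andbT.
by apply/span_subvP => t; rewrite !inE => /or4P [] /eqP ->; rewrite ?hM.
Qed.

Lemma quat_pair_generates x y : x \in H -> y \in H -> quat_pair x y ->
  generated_by al be ga H <<[:: x; y]>>%VS.
Proof.
move=> hx hy hq; split=> //; split.
  by apply/span_subvP => t; rewrite !inE => /orP [] /eqP ->.
move=> K [hK1 hKM] hTK; rewrite -(span_quat_pair hx hy hq).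
have [hxK hyK] : x \in K /\ y \in K.
  by split; apply: (subvP hTK); apply: memv_span; rewrite !inE eqxx ?orbT.
by apply/span_subvP => t; rewrite !inE => /or4P [] /eqP ->; rewrite ?hKM.
Qed.
End Subalgebra.

End Nondegenerate.
End CharNot2.
End Octonions.

Theorem mainTheorem14 (F : fieldType) (al be ga : F)
    (hal : al != 0) (hbe : be != 0) (hga : ga != 0)
    (hchar : (2%:R : F) != 0)
    (H : {vspace A8 F})
    (hH : is_subalgebra al be ga H) (hdim : \dim H = 4%N) :
  exists T : {vspace A8 F},
    sub_im T H /\ \dim T = 2%N /\
    (type_Q al be ga T \/ type_M al be ga T \/ type_D al be ga T \/
     type_J al be ga T) /\
    generated_by al be ga H T.
Proof.
have [x [y [hxV hyV hq]]] := exists_quat_pair hchar hal hbe hga hdim.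
move: hxV hyV; rewrite !mem_imag_part => /andP [hxH _] /andP [hyH _].
exists <<[:: x; y]>>%VS; split; [|split; [|split]].
- move=> t ht; split; last exact: conj_imag (pair_span_re hq ht).
  by case/mem_span2P: ht => a [b ->]; apply: memvD; apply: memvZ.
- exact: dim_pair_span hq.
- exact: (pair_plane_type hchar hq).
- exact: (quat_pair_generates hH hdim hxH hyH hq).
Qed.
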